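(* Let $(G,c)$ be an instance of min-cost 2ECSS and $(G',c')$ its inflation. For $x\in P_{EC}(G)$ define $x'\in\mathbb R^{E'}$ by $x'_{v'w'}=x_{vw}$ for each inter-clique edge $v'w'$ of $G'$ corresponding to the edge $vw$ of $G$, and $x'_{e'}=1$ for each $e'\in F'$. Then $x'\in P_{NC}(G')$ and $c'^{\top}x'=c^{\top}x$.
   Context: $G=(V,E)$ is a simple undirected graph with nonnegative edge costs $c\in\mathbb R_+^E$. $P_{EC}(G)=\{x\in\mathbb R^E: x(\delta_G(S))\ge 2\ \forall\,\emptyset\ne S\subsetneq V;\ 0\le x\le 1\}$ (the cut LP region for 2-edge connected spanning subgraphs), where $\delta_G(S)$ is the set of edges with exactly one end in $S$. Inflation: $G'=(V',E')$ is obtained by replacing each node $u$ of $G$ by a complete graph $C'_u$ on $\deg_G(u)$ new nodes (the $C'_u$ pairwise node-disjoint), and each edge $vw$ of $G$ by an edge $v'w'$ with $v'\in C'_v$, $w'\in C'_w$, such that each node of each $C'_u$ is incident to exactly one such inter-clique edge; costs: $c'_{v'w'}=c_{vw}$ and $c'_{e'}=0$ for every edge $e'$ in $F':=\bigcup_u E(C'_u)$. For a graph $H=(W,D)$ with nonnegative costs $d$, let $H^0=(W,\{e\in D: d_e=0\})$, and let $P_{NC}(H)$ (the partition LP region for 2NCSS) be the set of $x\in\mathbb R^D$ with $x(\delta_H(S))\ge 2$ for all $\emptyset\ne S\subsetneq W$, $0\le x\le 1$, and, for every node $w\in W$ and every partition $\mathcal P$ of $W\setminus\{w\}$ such that the node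 set of each connected component of $H^0-w$ is contained in a set of $\mathcal P$, $\sum_{e\in e_{H-w}(\mathcal P)}x_e\ge|\mathcal P|-1$, where $e_{H-w}(\mathcal P)$ is the set of edges of $H-w$ whose end nodes lie in different sets of $\mathcal P$. *)

From mathcomp Require Import all_boot all_order all_algebra.
Set Implicit Arguments. Unset Strict Implicit. Unset Printing Implicit Defensive.
Import Order.TTheory GRing.Theory Num.Theory.
Local Open Scope ring_scope.

Definition simple_graph (T : finType) (adj : rel T) : Prop :=
  symmetric adj /\ irreflexive adj.

Definition edgesG (T : finType) (adj : rel T) : {set {set T}} :=
  [set e : {set T} | [exists x, exists y, adj x y && (e == [set x; y])]].

Definition cutG (T : finType) (adj : rel T) (S : {set T}) : {set {set T}} :=
  [set e in edgesG adj | #|e :&: S| == 1%N].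

Definition xsum (R : realFieldType) (T : finType) (F : {set {set T}})
  (x : {set T} -> R) : R := \sum_(e in F) x e.

Definition costG (R : realFieldType) (T : finType) (adj : rel T)
  (c x : {set T} -> R) : R := \sum_(e in edgesG adj) c e * x e.

Definition cut_bounds (R : realFieldType) (T : finType) (adj : rel T)
  (x : {set T} -> R) : Prop :=
  (forall S : {set T}, S != set0 -> S != setT -> 2 <= xsum (cutG adj S) x) /\
  (forall e, e \in edgesG adj -> 0 <= x e <= 1).

Definition P_EC (R : realFieldType) (T : finType) (adj : rel T)
  (x : {set T} -> R) : Prop := cut_bounds adj x.

Definition adj0_minus (R : realFieldType) (T : finType) (adj : rel T)
  (d : {set T} -> R) (w : T) : rel T :=
  fun a b => [&& adj a b, d [set a; b] == 0, a != w & b != w].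

Definition comp0_minus (R : realFieldType) (T : finType) (adj : rel T)
  (d : {set T} -> R) (w a : T) : {set T} :=
  [set b | (b != w) && connect (adj0_minus adj d w) a b].

Definition cross_edges (T : finType) (adj : rel T) (w : T)
  (P : {set {set T}}) : {set {set T}} :=
  [set e in edgesG adj | (w \notin e) && ~~ [exists B in P, e \subset B]].

Definition P_NC (R : realFieldType) (T : finType) (adj : rel T)
  (d : {set T} -> R) (x : {set T} -> R) : Prop :=
  cut_bounds adj x /\
  (forall (w : T) (P : {set {set T}}),
     partition P (setT :\ w) ->
     (forall a, a != w -> exists2 B, B \in P & comp0_minus adj d w a \subset B) ->
     (#|P|%:R - 1 <= xsum (cross_edges adj w P) x)).

(* The clique C'_u consists of the nodes (u,f), f an edge of G at u;
   (u,f) is joined to every other (u,g) (clique edges F'), and to (w,f)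
   where f = uw (the inter-clique edge corresponding to f). *)
Definition inflV (T : finType) (adj : rel T) : finType :=
  {p : T * {set T} | (p.2 \in edgesG adj) && (p.1 \in p.2)}.

Definition infl_adj (T : finType) (adj : rel T) : rel (inflV adj) :=
  fun a b =>
    (((val a).1 == (val b).1) && ((val a).2 != (val b).2)) ||
    (((val a).2 == (val b).2) && ((val a).1 != (val b).1)).

(* For an edge e' of G': if it is an inter-clique edge, Some f where f is
   the corresponding edge of G; otherwise (e' in F') None. *)
Definition infl_origin (T : finType) (adj : rel T) (e' : {set inflV adj})
  : option {set T} :=
  if [pick a in e' | [exists b in e', (val b).1 != (val a).1]] is Some a
  then Some (val a).2 else None.

Definition infl_cost (R : realFieldType) (T : finType) (adj : rel T)
  (c : {set T} -> R) (e' : {set inflV adj}) : R :=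
  if infl_origin e' is Some f then c f else 0.

Definition infl_x (R : realFieldType) (T : finType) (adj : rel T)
  (x : {set T} -> R) (e' : {set inflV adj}) : R :=
  if infl_origin e' is Some f then x f else 1.

From mathcomp Require Import all_boot all_order all_algebra.
From mathcomp Require Import lra.
Set Implicit Arguments. Unset Strict Implicit. Unset Printing Implicit Defensive.
Import Order.TTheory GRing.Theory Num.Theory.
Local Open Scope ring_scope.

(* Clique edges cost 0 and get value 1, and every other edge of G' is the copy of an
   edge of G with the same cost and value; this gives the cost identity and the bounds.
   For a cut of G' given by S', let S be the set of nodes of G whose clique meets S'.
   An edge of the cut of S whose copy is not cut by S' has an end outside S' in a clique
   meeting S'; these ends inject into the clique edges cut by S', each of value 1, so
   x'(delta'(S')) >= x(delta(S)) >= 2 when S <> V. The complement of S' is handled the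
   same way, and if S' and its complement both meet every clique, two cliques are split.
   For the partition inequality at w, the clique of w minus w is connected by zero-cost
   edges, hence lies in one block; attaching w to that block and summing the cut
   constraints of the |P| blocks counts each crossing edge at most twice, and otherwise
   only the inter-clique edge at w, whose value is at most 1. *)

Lemma card_setI2 (T : finType) (a b : T) (S : {set T}) : a != b ->
  #|[set a; b] :&: S| = ((a \in S) + (b \in S))%N.
Proof.
move=> ab.
have card1I c : #|[set c] :&: S| = (c \in S).
  case: (boolP (c \in S)) => cS; first by rewrite (setIidPl _) ?cards1 ?sub1set.
  apply/eqP; rewrite cards_eq0; apply/eqP/setP => y; rewrite !inE.
  by apply/andP => -[/eqP-> ]; apply/negP.
rewrite setIUl cardsU !card1I setIACA setIid.
have -> : [set a] :&: [set b] = set0.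
  by apply/setP=> y; rewrite !inE; apply/andP=> -[/eqP-> /eqP ba]; rewrite ba eqxx in ab.
by rewrite set0I cards0 subn0.
Qed.

Lemma card_setI2_eq1 (T : finType) (a b : T) (S : {set T}) : a != b ->
  (#|[set a; b] :&: S| == 1%N) = ((a \in S) != (b \in S)).
Proof. by move=> ab; rewrite card_setI2 //; case: (a \in S); case: (b \in S). Qed.

Lemma xsum_filter (R : realFieldType) (T : finType) (A : {set {set T}})
    (p : pred {set T}) (x : {set T} -> R) :
  xsum [set e in A | p e] x = \sum_(e in A) (if p e then x e else 0).
Proof.
rewrite /xsum big_mkcond [RHS]big_mkcond; apply: eq_bigr => e _.
by rewrite inE; case: (e \in A); case: (p e).
Qed.

Section Cuts.
Variables (R : realFieldType) (T : finType) (adj : rel T).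
Hypothesis adj_irr : irreflexive adj.
Local Notation E := (edgesG adj).
Implicit Types (S : {set T}) (x : {set T} -> R).

Lemma edgesP e : reflect (exists a b, adj a b /\ e = [set a; b]) (e \in E).
Proof.
rewrite inE; apply: (iffP existsP) => [[a /existsP [b /andP [ab /eqP ->]]]|[a [b [ab ->]]]].
  by exists a, b.
by exists a; apply/existsP; exists b; rewrite ab eqxx.
Qed.

Lemma adj_neq a b : adj a b -> a != b.
Proof. by apply: contraTneq => ->; rewrite adj_irr. Qed.

Lemma cutGC S : cutG adj (~: S) = cutG adj S.
Proof.
apply/setP => e; rewrite [LHS]inE [RHS]inE; apply: andb_id2l => /edgesP [a [b [ab ->]]].
by rewrite !card_setI2_eq1 ?adj_neq // !inE; case: (a \in S); case: (b \in S).
Qed.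

Section DisjointFamily.
Variables (I : finType) (D : {pred I}) (B : I -> {set T}).
Hypothesis disjB : {in D &, forall i j, i != j -> [disjoint B i & B j]}.

Lemma sum_mem_disjoint_le a (y : R) : 0 <= y ->
  \sum_(i in D) (if a \in B i then y else 0) <= y.
Proof.
move=> y0; rewrite -big_mkcondr sumr_const -[leRHS]mulr1n; apply: ler_wpMn2l => //.
apply/card_le1_eqP => i j /andP [iD ai] /andP [jD aj].
apply/eqP; apply: contraTT aj => ji.
by rewrite (disjointFl (disjB jD iD ji) ai).
Qed.

(* Each edge leaves at most two of the disjoint sets, and none if it lies inside one. *)
Lemma sum_cut_disjoint_le x : (forall e, e \in E -> 0 <= x e) ->
  \sum_(i in D) xsum (cutG adj (B i)) x <=
  2 * xsum [set e in E | ~~ [exists i in D, e \subset B i]] x.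
Proof.
move=> x0; rewrite /cutG; under eq_bigr do rewrite xsum_filter.
rewrite exchange_big xsum_filter mulr_sumr; apply: ler_sum => e eE /=.
have:= eE => /edgesP [a [b [/adj_neq ab ee]]].
case: existsP => [[i0 /andP [i0D sub]] | _] /=.
  move: sub; rewrite ee subUset !sub1set => /andP [ai0 bi0].
  rewrite mulr0 big1 // => i iD; rewrite card_setI2_eq1 //.
  have [-> | ii0] := eqVneq i i0; first by rewrite ai0 bi0.
  by have /disjointFl dj := disjB iD i0D ii0; rewrite dj // dj.
apply: (le_trans (y := \sum_(i in D)
    ((if a \in B i then x e else 0) + (if b \in B i then x e else 0)))).
  apply: ler_sum => i _; rewrite {1}ee card_setI2_eq1 //.
  by have := x0 e eE; case: (a \in B i); case: (b \in B i) => /=; lra.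
rewrite big_split /= mulr_natl mulr2n.
by apply: lerD; apply: sum_mem_disjoint_le; apply: x0.
Qed.

End DisjointFamily.
End Cuts.

Section AttachToBlock.
Variables (T : finType) (w : T) (B0 : {set T}) (P : {set {set T}}).
Hypothesis partP : partition P (setT :\ w).
Implicit Types (B : {set T}).

Definition attach B : {set T} := if B == B0 then w |: B else B.

Lemma mem_attach a B : (a \in attach B) = (a \in B) || (B == B0) && (a == w).
Proof. by rewrite /attach; case: eqP; rewrite ?inE 1?orbC ?orbF. Qed.

Lemma subset_attach B : B \subset attach B.
Proof. by apply/subsetP => a aB; rewrite mem_attach aB. Qed.

Lemma notin_block B : B \in P -> w \notin B.
Proof.
move=> BP; apply/negP => wB; have: w \in cover P by apply: subsetP (bigcup_sup _ BP) _ wB.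
by rewrite (cover_partition partP) !inE eqxx.
Qed.

Lemma attach_disjoint :
  {in P &, forall B1 B2, B1 != B2 -> [disjoint attach B1 & attach B2]}.
Proof.
move=> B1 B2 B1P B2P B12; rewrite -setI_eq0; apply/set0Pn => -[a /setIP []].
have [-> | aw] := eqVneq a w.
  rewrite !mem_attach (negbTE (notin_block B1P)) (negbTE (notin_block B2P)) !eqxx !andbT.
  by move=> /eqP B10 /eqP B20; rewrite B10 B20 eqxx in B12.
rewrite !mem_attach (negbTE aw) !andbF !orbF => a1 a2.
have trivP := partition_trivIset partP.
by move: B12; rewrite -(def_pblock trivP B1P a1) -(def_pblock trivP B2P a2) eqxx.
Qed.

Lemma attach_proper B : (1 < #|P|)%N -> B \in P -> attach B != set0 /\ attach B != setT.
Proof.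
move=> P2 BP; have [B1 B1P B1B] : exists2 B1, B1 \in P & B1 != B.
  have:= P2; rewrite (cardsD1 B) BP ltnS card_gt0 => /set0Pn [B1].
  by rewrite !inE => /andP []; exists B1.
have block_neq0 B' : B' \in P -> exists a, a \in B'.
  by move=> B'P; apply/set0Pn; apply: contraNneq (partition_neq0 partP B'P) => ->.
have [a aB] := block_neq0 B BP; have [z zB1] := block_neq0 B1 B1P.
split; first by apply/set0Pn; exists a; apply: subsetP (subset_attach B) _ aB.
apply/negP => /eqP BT; have:= attach_disjoint B1P BP B1B.
by rewrite BT disjoints_subset setCT subset0 => /eqP B10; have:= subset_attach B1;
  rewrite B10 subset0 => /eqP B1e; rewrite B1e inE in zB1.
Qed.

End AttachToBlock.

Section Inflation.
Variables (R : realFieldType) (V : finType) (adj : rel V).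
Hypothesis adj_irr : irreflexive adj.
Local Notation V' := (inflV adj).
Local Notation adj' := (@infl_adj V adj).
Local Notation E := (edgesG adj).
Local Notation E' := (edgesG adj').
(* A node a of G' belongs to the clique of [home a] and is an end of the copy of the
   edge [port a] of G. *)
Local Notation home a := (val a).1.
Local Notation port a := (val a).2.
Implicit Types (a b : V') (f : {set V}) (e : {set V'}).

Lemma infl_node_inj a b : home a = home b -> port a = port b -> a = b.
Proof.
by move=> h p; apply: val_inj; move: h p; case: (val a); case: (val b) => ?? ?? /= -> ->.
Qed.

Lemma port_edge a : port a \in E.
Proof. by case/andP: (valP a). Qed.

Lemma home_port a : home a \in port a.
Proof. by case/andP: (valP a). Qed.

Lemma infl_adj_irr : irreflexive adj'.
Proof. by move=> a; rewrite /infl_adj !eqxx. Qed.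

Definition infl_edge f : {set V'} := [set a | port a == f].

Lemma mem_infl_edge a f : (a \in infl_edge f) = (port a == f).
Proof. by rewrite inE. Qed.

Lemma infl_edgeP f : f \in E -> exists a b : V',
  [/\ port a = f, port b = f, home a != home b, infl_edge f = [set a; b]
    & f = [set home a; home b]].
Proof.
move=> fE; have:= fE => /edgesP [u [v [uv fuv]]].
have ha : ((u, f).2 \in E) && ((u, f).1 \in (u, f).2) by rewrite /= fE fuv !inE eqxx.
have hb : ((v, f).2 \in E) && ((v, f).1 \in (v, f).2) by rewrite /= fE fuv !inE eqxx orbT.
exists (exist _ (u, f) ha), (exist _ (v, f) hb); split => //=; first exact: adj_neq uv.
apply/setP => y; rewrite !inE; apply/eqP/idP => [py | /orP [] /eqP -> //].
have:= home_port y; rewrite py {1}fuv !inE => /orP [] /eqP hy.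
  by apply/orP; left; apply/eqP; apply: infl_node_inj.
by apply/orP; right; apply/eqP; apply: infl_node_inj.
Qed.

Lemma infl_edge_in f : f \in E -> infl_edge f \in E'.
Proof.
move=> /infl_edgeP [a [b [pa pb hab -> _]]]; apply/edgesP; exists a, b; split => //.
by rewrite /infl_adj pa pb eqxx hab orbT.
Qed.

Lemma infl_origin_edge f : f \in E -> infl_origin (infl_edge f) = Some f.
Proof.
move=> fE; rewrite /infl_origin; case: pickP => [a /andP [] | none].
  by rewrite mem_infl_edge => /eqP ->.
have [a [b [pa pb hab eab _]]] := infl_edgeP fE.
have:= none a; rewrite eab !inE eqxx /= => /negbT /existsPn /(_ b).
by rewrite !inE eqxx orbT eq_sym hab.
Qed.

Lemma infl_origin_clique a b : home a = home b -> infl_origin [set a; b] = None.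
Proof.
move=> h; rewrite /infl_origin; case: pickP => [a' /andP [] | //].
by rewrite !inE => /orP [] /eqP -> /existsP [b' /andP []];
  rewrite !inE => /orP [] /eqP ->; rewrite ?h eqxx.
Qed.

Lemma infl_edgesP e : e \in E' ->
  (exists a b, [/\ a != b, home a = home b, e = [set a; b] & infl_origin e = None])
  \/ (exists2 f, f \in E & e = infl_edge f).
Proof.
move=> /edgesP [a [b [/orP [] /andP [/eqP h ab] ->]]].
  left; exists a, b; split => //; last exact: infl_origin_clique.
  by apply: contra_neq ab => ->.
right; exists (port a); first exact: port_edge.
have [a' [b' [pa' pb' hab' -> fab]]] := infl_edgeP (port_edge a).
have [ha hb] : home a \in [set home a'; home b'] /\ home b \in [set home a'; home b'].
  by rewrite -fab h home_port -h home_port.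
have {}pb' : port b' = port b by rewrite pb' h.
move: ha hb; rewrite !inE => /orP [] /eqP ha /orP [] /eqP hb;
  try by move: ab; rewrite ha hb eqxx.
- by rewrite (infl_node_inj ha (esym pa')) (infl_node_inj hb (esym pb')).
- rewrite (infl_node_inj ha (etrans h (esym pb'))).
  by rewrite (infl_node_inj hb (etrans (esym h) (esym pa'))) setUC.
Qed.

Lemma sum_infl_edges (phi : {set V'} -> R) : \sum_(e in E') phi e =
  \sum_(f in E) phi (infl_edge f) + \sum_(e in E' | infl_origin e == None) phi e.
Proof.
rewrite (bigID (fun e => infl_origin e == None)) /= addrC; congr (_ + _).
have infl_edge_inj : {in E &, injective infl_edge}.
  move=> f g fE _ fg; have [a [_ [pa _ _ _ _]]] := infl_edgeP fE.
  by have:= mem_infl_edge a g; rewrite -fg mem_infl_edge pa eqxx => /esym /eqP.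
rewrite -(big_imset _ infl_edge_inj); apply: eq_bigl => e.
apply/andP/imsetP => [[eE] | [f fE ->]]; last by rewrite infl_edge_in ?infl_origin_edge.
by case: (infl_edgesP eE) => [[a [b [_ _ _ ->]]] | [f fE ->]] //; exists f.
Qed.

Lemma infl_costG (c x : {set V} -> R) :
  costG adj' (infl_cost c) (infl_x x) = costG adj c x.
Proof.
rewrite /costG sum_infl_edges [X in _ + X]big1 ?addr0 => [|e /andP [_ /eqP o]].
  by apply: eq_bigr => f fE; rewrite /infl_cost /infl_x infl_origin_edge.
by rewrite /infl_cost o mul0r.
Qed.

Lemma infl_x_bounds (x : {set V} -> R) : (forall f, f \in E -> 0 <= x f <= 1) ->
  forall e, e \in E' -> 0 <= infl_x x e <= 1.
Proof.
move=> xb e /infl_edgesP [[a [b [_ _ _ o]]] | [f fE ->]].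
  by rewrite /infl_x o ler01 lexx.
by rewrite /infl_x infl_origin_edge // xb.
Qed.

Section InflatedCut.
Variable S' : {set V'}.

Definition clique_cut : {set {set V'}} :=
  [set e in E' | (infl_origin e == None) && (#|e :&: S'| == 1%N)].

Lemma xsum_infl_cut (x : {set V} -> R) : xsum (cutG adj' S') (infl_x x) =
  \sum_(f in E) (if #|infl_edge f :&: S'| == 1%N then x f else 0) + #|clique_cut|%:R.
Proof.
rewrite /cutG xsum_filter sum_infl_edges; congr (_ + _).
  by apply: eq_bigr => f fE; rewrite /infl_x infl_origin_edge.
rewrite -sum1_card natr_sum /clique_cut big_mkcond [RHS]big_mkcond /=.
apply: eq_bigr => e _; rewrite [in RHS]inE.
case: (e \in E'); case: (infl_origin e =P None) => [o|] //=.
by rewrite /infl_x o; case: ifP.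
Qed.

Lemma clique_cut_pair a b : a \in S' -> b \notin S' -> home a = home b ->
  [set a; b] \in clique_cut.
Proof.
move=> aS bS h; have ab : a != b by apply: contraTneq aS => ->.
rewrite inE infl_origin_clique // eqxx card_setI2_eq1 // aS (negbTE bS) andbT.
apply/edgesP; exists a, b; split => //; rewrite /infl_adj h eqxx /=.
by rewrite andbF orbF; apply: contra_neq ab => /(infl_node_inj h).
Qed.

Definition infl_proj : {set V} := [set u | [exists a in S', home a == u]].

Lemma mem_infl_proj a : a \in S' -> home a \in infl_proj.
Proof. by move=> aS; rewrite inE; apply/existsP; exists a; rewrite aS eqxx. Qed.

Definition rim : {set V'} := [set a | (a \notin S') && (home a \in infl_proj)].

Lemma card_rim_le : (#|rim| <= #|clique_cut|)%N.
Proof.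
pose r a := odflt a [pick b in S' | home b == home a].
have rP a : a \in rim -> r a \in S' /\ home (r a) = home a.
  rewrite inE => /andP [_]; rewrite inE => /existsP [b /andP [bS /eqP ba]].
  rewrite /r; case: pickP => [b' /andP [b'S /eqP] // | /(_ b)].
  by rewrite bS ba eqxx.
have pair_inj : {in rim &, injective (fun a => [set r a; a])}.
  move=> a a' aR a'R /= h; have: a \in [set r a; a] by rewrite !inE eqxx orbT.
  rewrite h !inE => /orP [] /eqP // ar; have [ra'S _] := rP a' a'R.
  by move: aR; rewrite inE ar ra'S.
rewrite -(card_in_imset pair_inj); apply/subset_leq_card/subsetP => e /imsetP [a aR ->].
have [raS ra] := rP a aR; move: aR; rewrite inE => /andP [aS _].
exact: clique_cut_pair.
Qed.

Definition lost_edges : {set {set V}} :=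
  [set f in E | (#|f :&: infl_proj| == 1%N) && (#|infl_edge f :&: S'| != 1%N)].

Lemma lost_edges_sub : lost_edges \subset [set port a | a in rim].
Proof.
apply/subsetP => f; rewrite inE => /andP [fE /andP []].
have [a [b [pa pb hab eab fab]]] := infl_edgeP fE.
have ab : a != b by apply: contra_neq hab => ->.
rewrite eab {1}fab !card_setI2_eq1 // => hp /negPn /eqP ee.
have [aP | aP] := boolP (home a \in infl_proj).
  have bP : home b \notin infl_proj by rewrite aP in hp.
  apply/imsetP; exists a => //; rewrite inE aP andbT ee.
  by apply: contraNN bP => /mem_infl_proj.
have bP : home b \in infl_proj by move: hp; rewrite (negbTE aP); case: (_ \in _).
apply/imsetP; exists b => //; rewrite inE bP andbT -ee.
by apply: contraNN aP => /mem_infl_proj.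
Qed.

Lemma cut_infl_proj_le (x : {set V} -> R) : (forall f, f \in E -> 0 <= x f <= 1) ->
  xsum (cutG adj infl_proj) x <= xsum (cutG adj' S') (infl_x x).
Proof.
move=> xb; rewrite xsum_infl_cut /cutG xsum_filter.
apply: (le_trans (y := \sum_(f in E)
    ((if #|infl_edge f :&: S'| == 1%N then x f else 0) + (f \in lost_edges)%:R))).
  apply: ler_sum => f fE; have /andP [x0 x1] := xb f fE.
  by rewrite inE fE /=; case: (_ == 1%N); case: (_ == 1%N) => /=; lra.
rewrite big_split lerD2l -natr_sum ler_nat.
have -> : (\sum_(f in E) (f \in lost_edges) = #|lost_edges|)%N.
  rewrite -sum1_card big_mkcond [RHS]big_mkcond; apply: eq_bigr => f _.
  by rewrite [f \in lost_edges]inE; case: (f \in E).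
apply: leq_trans (subset_leq_card lost_edges_sub) _.
exact: leq_trans (leq_imset_card _ _) card_rim_le.
Qed.

End InflatedCut.

Lemma clique_cut_ge2 S' : S' != set0 ->
  infl_proj S' = setT -> infl_proj (~: S') = setT -> (2 <= #|clique_cut S'|)%N.
Proof.
move=> /set0Pn [a0 _] pS pSC.
have split_clique u : exists a b, [/\ a \in S', b \notin S', home a = u & home b = u].
  have:= in_setT u; rewrite -{1}pS inE => /existsP [a /andP [aS /eqP au]].
  have:= in_setT u; rewrite -pSC inE => /existsP [b /andP [bS /eqP bu]].
  by exists a, b; rewrite inE in bS.
have [a [b [_ _ hab _ _]]] := infl_edgeP (port_edge a0).
have [a1 [b1 [a1S b1S a1h b1h]]] := split_clique (home a).
have [a2 [b2 [a2S b2S a2h b2h]]] := split_clique (home b).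
have e1 := clique_cut_pair a1S b1S (etrans a1h (esym b1h)).
have e2 := clique_cut_pair a2S b2S (etrans a2h (esym b2h)).
have e12 : [set a1; b1] != [set a2; b2].
  apply: contra_neq hab => e12; have:= setU11 a1 [set b1]; rewrite e12 !inE.
  by case/orP => /eqP e; rewrite -a1h e ?a2h ?b2h.
have:= cards2 [set a1; b1] [set a2; b2]; rewrite e12 => <-.
by apply/subset_leq_card/subsetP => e /set2P [] ->.
Qed.

Lemma infl_cut_ge2 (x : {set V} -> R) :
  (forall S, S != set0 -> S != setT -> 2 <= xsum (cutG adj S) x) ->
  (forall f, f \in E -> 0 <= x f <= 1) ->
  forall S', S' != set0 -> S' != setT -> 2 <= xsum (cutG adj' S') (infl_x x).
Proof.
move=> hcut xb.
have via_proj T' : T' != set0 -> infl_proj T' != setT -> 2 <= xsum (cutG adj' T') (infl_x x).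
  move=> /set0Pn [a aT] pT; apply: le_trans (cut_infl_proj_le T' xb).
  by apply: hcut pT; apply/set0Pn; exists (home a); apply: mem_infl_proj.
move=> S' S'0 S'T; have [pS | pS] := eqVneq (infl_proj S') setT; last exact: via_proj.
have [pSC | pSC] := eqVneq (infl_proj (~: S')) setT; last first.
  rewrite -cutGC; last exact: infl_adj_irr.
  by apply: via_proj pSC; apply: contra_neq S'T => h; rewrite -(setCK S') h setC0.
rewrite xsum_infl_cut; have:= clique_cut_ge2 S'0 pS pSC; rewrite -(ler_nat R).
have: 0 <= \sum_(f in E) (if #|infl_edge f :&: S'| == 1%N then x f else 0).
  by apply: sumr_ge0 => f fE; case: ifP => // _; case/andP: (xb f fE).
lra.
Qed.

Lemma infl_edges_at w e : e \in E' -> w \in e ->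
  (exists2 b, b != w & home b = home w /\ e = [set w; b]) \/ e = infl_edge (port w).
Proof.
move=> /infl_edgesP [[a [b [ab h -> _]]] | [f fE ->]].
  rewrite !inE => /orP [] /eqP ->; left.
    by exists b; rewrite // eq_sym.
  by exists a; rewrite // setUC.
by rewrite mem_infl_edge => /eqP ->; right.
Qed.

Lemma clique_mates_block (c : {set V} -> R) w (P : {set {set V'}}) : P != set0 ->
  (forall a, a != w -> exists2 B, B \in P & comp0_minus adj' (infl_cost c) w a \subset B) ->
  exists2 B0, B0 \in P & forall b, b != w -> home b = home w -> b \in B0.
Proof.
move=> /set0Pn [B1 B1P] hcomp.
case: (pickP (fun b => (b != w) && (home b == home w))) => [a /andP [aw /eqP ah] | none];
  last by exists B1 => // b bw /eqP bh; have:= none b; rewrite bw bh.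
have [B0 B0P sub] := hcomp a aw; exists B0 => // b bw bh.
apply: (subsetP sub); rewrite inE bw /=; have [-> | ba] := eqVneq b a; first exact: connect0.
have ab : home a = home b by rewrite ah bh.
apply: connect1; rewrite /adj0_minus aw bw !andbT /infl_cost infl_origin_clique // eqxx.
by rewrite andbT /infl_adj ab eqxx andbF orbF; apply: contra_neq ba => /(infl_node_inj ab).
Qed.

Lemma xsum_outside_attach_le (x : {set V} -> R) w (P : {set {set V'}}) B0 :
  (forall f, f \in E -> 0 <= x f <= 1) -> B0 \in P ->
  (forall b, b != w -> home b = home w -> b \in B0) ->
  xsum [set e in E' | ~~ [exists B in P, e \subset attach w B0 B]] (infl_x x)
    <= xsum (cross_edges adj' w P) (infl_x x) + infl_x x (infl_edge (port w)).
Proof.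
move=> xb B0P B0w; set x' := infl_x x; set fw := infl_edge (port w).
have -> : x' fw = \sum_(e in E') (if e == fw then x' e else 0).
  rewrite -big_mkcondr (big_pred1 fw) // => e /=.
  by case: eqP => [-> | _]; rewrite ?andbF // andbT infl_edge_in ?port_edge.
rewrite /cross_edges !xsum_filter -big_split; apply: ler_sum => e eE.
have /andP [x0 _] : 0 <= x' e <= 1 := infl_x_bounds xb eE.
case: existsP => [_ | nin] /=.
  by case: ifP; case: ifP; lra.
have [we | we] := boolP (w \in e); last first.
  rewrite ifT; first by case: ifP; lra.
  apply/existsP => -[B /andP [BP eB]]; apply: nin; exists B.
  by rewrite BP (subset_trans eB (subset_attach _ _ B)).
case: (infl_edges_at eE we) => [[b bw [bh ee]] | efw]; last by rewrite efw eqxx add0r.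
exfalso; apply: nin; exists B0; rewrite B0P ee subUset !sub1set !mem_attach !eqxx.
by rewrite (B0w b bw bh) orbT.
Qed.

Lemma infl_partition_ge (c x : {set V} -> R) :
  (forall f, f \in E -> 0 <= x f <= 1) ->
  (forall S', S' != set0 -> S' != setT -> 2 <= xsum (cutG adj' S') (infl_x x)) ->
  forall w (P : {set {set V'}}), partition P (setT :\ w) ->
  (forall a, a != w -> exists2 B, B \in P & comp0_minus adj' (infl_cost c) w a \subset B) ->
  #|P|%:R - 1 <= xsum (cross_edges adj' w P) (infl_x x).
Proof.
move=> xb hcut w P partP hcomp.
have x0 e : e \in E' -> 0 <= infl_x x e by move=> /(infl_x_bounds xb) /andP [].
have [P1 | P2] := leqP #|P| 1.
  have: 0 <= xsum (cross_edges adj' w P) (infl_x x).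
    by rewrite xsum_filter; apply: sumr_ge0 => e eE; case: ifP; rewrite ?x0.
  by move: P1; rewrite -(ler_nat R); lra.
have [B0 B0P B0w] : exists2 B0, B0 \in P & forall b, b != w -> home b = home w -> b \in B0.
  by apply: clique_mates_block hcomp; apply: contraTneq P2 => ->; rewrite cards0.
have lower : 2 * #|P|%:R <= \sum_(B in P) xsum (cutG adj' (attach w B0 B)) (infl_x x).
  rewrite mulr_natr -sumr_const; apply: ler_sum => B BP.
  by have [] := attach_proper B0 partP P2 BP; apply: hcut.
have upper := sum_cut_disjoint_le infl_adj_irr (attach_disjoint B0 partP) x0.
have outside := xsum_outside_attach_le xb B0P B0w.
have: infl_x x (infl_edge (port w)) <= 1.
  by case/andP: (infl_x_bounds xb (infl_edge_in (port_edge w))).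
lra.
Qed.

End Inflation.

Unset Implicit Arguments.

Theorem mainTheorem9 (R : realFieldType) (V : finType) (adj : rel V)
  (c x : {set V} -> R) :
  simple_graph adj ->
  (forall e, e \in edgesG adj -> 0 <= c e) ->
  P_EC adj x ->
  P_NC (@infl_adj V adj) (infl_cost c) (infl_x x) /\
  costG (@infl_adj V adj) (infl_cost c) (infl_x x) = costG adj c x.
Proof.
move=> [_ adj_irr] _ [hcut xb].
have cut_infl := infl_cut_ge2 adj_irr hcut xb.
split; last exact: infl_costG.
split; first by split; [exact: cut_infl | exact: infl_x_bounds].
exact: infl_partition_ge.
Qed.
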